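(* Let $R$ be a commutative ring with identity and $I$ an ideal of $R$. Then the amalgamated duplication $R\bowtie I$ is a properly zipped ring if and only if $R$ is properly zipped.
   Context: $R\bowtie I:=\{(r,r+i)\mid r\in R,\ i\in I\}$, a subring of $R\times R$. A commutative ring $A$ is properly zipped if whenever a prime ideal $\mathfrak{p}$ of $A$ contains the intersection of a family $\{\mathfrak{p}_i\}_i$ of prime ideals of $A$, then $\mathfrak{p}_i\subseteq\mathfrak{p}$ for some $i$. *)

From HB Require Import structures.
From mathcomp Require Import all_boot all_algebra.
Set Implicit Arguments. Unset Strict Implicit. Unset Printing Implicit Defensive.
Import GRing.Theory.
Local Open Scope ring_scope.

(* Subrings of a commutative ring T are represented by a predicate S on T;
   ideals / prime ideals of the subring S are subsets of S. *)

Definition is_ideal (T : comPzRingType) (S : T -> Prop) (P : T -> Prop) : Prop :=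
  (forall x, P x -> S x) /\ P 0 /\
  (forall x y, P x -> P y -> P (x - y)) /\
  (forall a x, S a -> P x -> P (a * x)).

Definition is_prime_in (T : comPzRingType) (S : T -> Prop) (P : T -> Prop) : Prop :=
  is_ideal S P /\ ~ P 1 /\
  (forall a b, S a -> S b -> P (a * b) -> P a \/ P b).

Definition properly_zipped_in (T : comPzRingType) (S : T -> Prop) : Prop :=
  forall (J : Type) (F : J -> T -> Prop) (p : T -> Prop),
    is_prime_in S p -> (forall j, is_prime_in S (F j)) ->
    (forall x, S x -> (forall j, F j x) -> p x) ->
    exists j, forall x, F j x -> p x.

Definition properly_zipped (R : comPzRingType) : Prop :=
  properly_zipped_in (fun _ : R => True).

Definition amalg_dup (R : comPzRingType) (I : R -> Prop) : R * R -> Prop :=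
  fun x => exists r i, I i /\ x = (r, r + i).

From mathcomp Require Import all_boot all_algebra.
From Stdlib Require Import Classical.
From mathcomp Require Import ring.
Set Implicit Arguments. Unset Strict Implicit. Unset Printing Implicit Defensive.
Local Open Scope ring_scope.
Import GRing.Theory.

(* A prime Q of R ⋈ I contains the kernel of one of the two coordinate maps
   R ⋈ I -> R, since (0, i) (j, 0) = 0; it is then the preimage under that
   coordinate of its contraction Q^c = {r | (r, r) \in Q}, because x - (x_b, x_b)
   lies in the kernel of the b-th coordinate.  So a zipping problem in R ⋈ I
   reduces to its contraction in R: when I ⊆ p^c, p is the preimage of p^c under
   both coordinates; otherwise pick s in I outside p^c and keep only the F_j
   containing the same kernel as p, whose contractions intersect inside p^c after
   multiplication by s.  Conversely, a zipping problem in R lifts to R ⋈ I along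
   the first coordinate. *)

Section IdealFacts.
Variables (T : comPzRingType) (S P : T -> Prop).
Hypothesis idealP : is_ideal S P.

Lemma ideal_sub x : P x -> S x. Proof. by case: idealP => h _; apply: h. Qed.
Lemma ideal0 : P 0. Proof. by case: idealP => _ []. Qed.
Lemma idealB x y : P x -> P y -> P (x - y).
Proof. by case: idealP => _ [_ [h _]]; apply: h. Qed.
Lemma idealMl a x : S a -> P x -> P (a * x).
Proof. by case: idealP => _ [_ [_ h]]; apply: h. Qed.
Lemma idealN x : P x -> P (- x).
Proof. by move=> Px; rewrite -sub0r; apply: idealB => //; apply: ideal0. Qed.
Lemma idealD x y : P x -> P y -> P (x + y).
Proof. by move=> Px Py; rewrite -[y]opprK; apply: idealB => //; apply: idealN. Qed.

End IdealFacts.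

Section AmalgamatedDuplication.
Variables (R : comPzRingType) (I : R -> Prop).
Hypothesis idealI : is_ideal (fun _ : R => True) I.
Local Notation A := (amalg_dup I).

Lemma amalgP x : A x <-> I (x.2 - x.1).
Proof.
split; first by case=> r [i [Ii ->]] /=; rewrite addrAC subrr add0r.
by case: x => a b /= Iba; exists a, (b - a); rewrite subrKC.
Qed.

Lemma amalg_diag r : A (r, r).
Proof. by apply/amalgP; rewrite /= subrr; apply: ideal0 idealI. Qed.

Lemma amalgB x y : A x -> A y -> A (x - y).
Proof.
case: x y => a b [c d] /amalgP /= Iba /amalgP /= Idc; apply/amalgP => /=.
have -> : b - d - (a - c) = (b - a) - (d - c) by ring.
exact: idealB idealI _ _ Iba Idc.
Qed.

Lemma amalgM x y : A x -> A y -> A (x * y).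
Proof.
case: x y => a b [c d] /amalgP /= Iba /amalgP /= Idc; apply/amalgP => /=.
have -> : b * d - a * c = b * (d - c) + c * (b - a) by ring.
by apply: (idealD idealI); apply: (idealMl idealI).
Qed.

Definition coord (b : bool) (x : R * R) : R := if b then x.2 else x.1.

Definition on_axis (b : bool) (u : R) : R * R := if b then (0, u) else (u, 0).

Lemma amalg_on_axis b u : I u -> A (on_axis b u).
Proof.
move=> Iu; apply/amalgP; case: b => /=; first by rewrite subr0.
by rewrite sub0r; apply: (idealN idealI).
Qed.

Definition contract (Q : R * R -> Prop) (r : R) : Prop := Q (r, r).

Lemma contract_ideal Q :
  is_ideal A Q -> is_ideal (fun _ : R => True) (contract Q).
Proof.
move=> idealQ; split=> //; split; first exact: (ideal0 idealQ).
split; first by move=> x y; apply: (idealB idealQ).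
by move=> a x _; apply: (idealMl idealQ (amalg_diag a)).
Qed.

Lemma contract_prime Q :
  is_prime_in A Q -> is_prime_in (fun _ : R => True) (contract Q).
Proof.
case=> idealQ [Q1 primeQ]; split; first exact: contract_ideal.
split=> // a b _ _; exact: primeQ (amalg_diag a) (amalg_diag b).
Qed.

Definition contains_ker (b : bool) (Q : R * R -> Prop) : Prop :=
  forall x, A x -> coord b x = 0 -> Q x.

Lemma prime_contains_ker Q : is_prime_in A Q -> exists b, contains_ker b Q.
Proof.
case=> idealQ [_ primeQ]; case: (classic (contains_ker false Q)) => ker1.
  by exists false.
exists true => y Ay y2; apply: NNPP => nQy; apply: ker1 => x Ax x1.
apply: NNPP => nQx.
have Qxy : Q (x * y).
  case: x y x1 y2 {Ax Ay nQx nQy} => a b [c d] /= -> ->.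
  have -> : ((0, b) * (c, 0) : R * R) = (0 * c, b * 0) := erefl.
  by rewrite mul0r mulr0; apply: (ideal0 idealQ).
by case: (primeQ _ _ Ax Ay Qxy).
Qed.

Lemma contains_kerE b Q : is_ideal A Q -> contains_ker b Q ->
  forall x, A x -> Q x <-> contract Q (coord b x).
Proof.
move=> idealQ kerQ x Ax.
have Qd : Q (x - (coord b x, coord b x)).
  apply: kerQ; first exact: amalgB (amalg_diag _).
  by case: b; rewrite /= subrr.
rewrite /contract; split=> [Qx | Qc].
  by rewrite -[(coord b x, _)](subKr x); apply: (idealB idealQ).
by rewrite -[x](subrK (coord b x, coord b x)) addrC; apply: (idealD idealQ).
Qed.

Lemma coord_on_axis c b u : coord c (on_axis b u) = if c == b then u else 0.
Proof. by case: b c => [] []. Qed.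

Lemma contract_coord_eq Q : is_ideal A Q -> (forall s, I s -> contract Q s) ->
  forall b c x, A x -> contract Q (coord b x) <-> contract Q (coord c x).
Proof.
move=> idealQ IQ b c x /amalgP Ix; have idealQc := contract_ideal idealQ.
have Q12 : contract Q x.1 <-> contract Q x.2.
  split=> Qx.
    by rewrite -[x.2](subrK x.1) addrC; apply: (idealD idealQc) => //; apply: IQ.
  by rewrite -[x.1](subKr x.2); apply: (idealB idealQc) => //; apply: IQ.
by case: b c => [] [] //=; rewrite Q12.
Qed.

Section Zipped.
Hypothesis zippedR : properly_zipped R.
Variables (J : Type) (F : J -> R * R -> Prop) (p : R * R -> Prop).
Hypotheses (primep : is_prime_in A p) (primeF : forall j, is_prime_in A (F j)).
Hypothesis capFp : forall x, A x -> (forall j, F j x) -> p x.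

(* If r lies in the contraction of every [F j] containing the [b]-th kernel,
   then [on_axis b (r * s)] lies in every [F j]: in those through their
   contraction, in the others because it is in the kernel of the other
   coordinate.  Hence r s, and so r, lies in the contraction of [p]. *)
Lemma zip_amalg_I_not_sub b s : contains_ker b p -> I s -> ~ contract p s ->
  exists j, forall x, F j x -> p x.
Proof.
move=> kerp Is nps; pose K := {j : J | contains_ker b (F j)}.
have capK r : True -> (forall k : K, contract (F (sval k)) r) -> contract p r.
  move=> _ Fr; have Ae : A (on_axis b (r * s)).
    by apply: amalg_on_axis; apply: (idealMl idealI).
  have /(contains_kerE primep.1 kerp Ae) : p (on_axis b (r * s)).
    apply: (capFp Ae) => j; case: (classic (contains_ker b (F j))) => [kerj | nkerj].
      apply/(contains_kerE (primeF j).1 kerj Ae); rewrite coord_on_axis eqxx mulrC.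
      exact: (idealMl (contract_ideal (primeF j).1) _ (Fr (exist _ j kerj))).
    have [c kerj] := prime_contains_ker (primeF j).
    have /negbTE cb : c != b by apply/eqP => cb; apply: nkerj; rewrite -cb.
    by apply: kerj Ae _; rewrite coord_on_axis cb.
  rewrite coord_on_axis eqxx; have [_ [_ primepc]] := contract_prime primep.
  by case/(primepc r s) => // /nps.
have [[j kerj] subj] := zippedR (contract_prime primep)
  (fun k : K => contract_prime (primeF (sval k))) capK.
exists j => x Fx; have Ax := ideal_sub (primeF j).1 Fx.
by apply/(contains_kerE primep.1 kerp Ax)/subj/(contains_kerE (primeF j).1 kerj Ax).
Qed.

Lemma zip_amalg_I_sub : (forall s, I s -> contract p s) ->
  exists j, forall x, F j x -> p x.
Proof.
move=> Ip; have [b kerp] := prime_contains_ker primep.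
have [j subj] := zippedR (contract_prime primep)
  (fun j => contract_prime (primeF j)) (fun r _ Fr => capFp (amalg_diag r) Fr).
exists j => x Fx; have Ax := ideal_sub (primeF j).1 Fx.
have [c kerj] := prime_contains_ker (primeF j).
apply/(contains_kerE primep.1 kerp Ax)/(contract_coord_eq primep.1 Ip b c Ax).
by apply/subj/(contains_kerE (primeF j).1 kerj Ax).
Qed.

End Zipped.

Lemma properly_zipped_amalg : properly_zipped R -> properly_zipped_in A.
Proof.
move=> zippedR J F p primep primeF capFp.
case: (classic (exists s, I s /\ ~ contract p s)) => [[s [Is nps]] | Ip].
  have [b kerp] := prime_contains_ker primep.
  exact: zip_amalg_I_not_sub kerp Is nps.
apply: zip_amalg_I_sub => // s Is.
by apply: NNPP => nps; apply: Ip; exists s.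
Qed.

Definition fst_preimage (Q : R -> Prop) (x : R * R) : Prop := A x /\ Q x.1.

Lemma fst_preimage_prime Q :
  is_prime_in (fun _ : R => True) Q -> is_prime_in A (fst_preimage Q).
Proof.
case=> idealQ [Q1 primeQ]; split; last split.
- split; first by move=> x [].
  split; first by split; [exact: amalg_diag | exact: ideal0 idealQ].
  split; first by move=> x y [Ax Qx] [Ay Qy]; split;
    [exact: amalgB | exact: (idealB idealQ Qx Qy)].
  by move=> a x Aa [Ax Qx]; split; [exact: amalgM | exact: (idealMl idealQ _ Qx)].
- by case=> _ /Q1.
- move=> a b Aa Ab [_ Qab].
  by case: (primeQ a.1 b.1 _ _ Qab) => // [Qa | Qb]; [left | right].
Qed.

Lemma properly_zipped_of_amalg : properly_zipped_in A -> properly_zipped R.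
Proof.
move=> zippedA J F p primep primeF capFp.
have [j subj] := zippedA J (fun j => fst_preimage (F j)) (fst_preimage p)
  (fst_preimage_prime primep) (fun j => fst_preimage_prime (primeF j))
  (fun x Ax Fx => conj Ax (capFp x.1 Logic.I (fun j => (Fx j).2))).
by exists j => r Fr; case: (subj (r, r) (conj (amalg_diag r) Fr)).
Qed.

End AmalgamatedDuplication.

Theorem corollary4p8 (R : comPzRingType) (I : R -> Prop)
  (hI : is_ideal (fun _ : R => True) I) :
  properly_zipped_in (amalg_dup I) <-> properly_zipped R.
Proof.
split; [exact: properly_zipped_of_amalg | exact: properly_zipped_amalg].
Qed.
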